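(* Let $b\in(0,\frac16)$, let $G$ and $v_{\max}$ be as below, and let $u_-,u_+\in[-1,1]$ with $u_->v_{\max}$ and $u_+<-v_{\max}$. Then the upper concave envelope $G_\frown$ of $G$ on $[u_+,u_-]$ equals $G$ on $[u_+,-v_{\max}]\cup[v_{\max},u_-]$ and equals the constant $G(v_{\max})$ on $[-v_{\max},v_{\max}]$. Consequently, the entropy solution $u(x,t)$ of the Riemann problem $\partial_tu+\partial_xG(u)=0$, $u(x,0)=u_-$ for $x\le0$, $u(x,0)=u_+$ for $x>0$, consists of a rarefaction fan, a stationary shock at $x=0$, and a rarefaction fan, with $\lim_{x\to0^-}u(x,t)=v_{\max}$ and $\lim_{x\to0^+}u(x,t)=-v_{\max}$ for every $t>0$; in particular the jump at $0$ is $-2v_{\max}$.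
   Context: $G(v)=-\frac{v^2}{2}+\frac{4b^2+(1-2b)^2v^2}{2(4b^2+(1-2b)\sqrt{4b^2+(1-4b)v^2})}$ on $[-1,1]$ and $v_{\max}=\frac12\sqrt{\frac{(1+2b)(1-6b)}{1-4b}}$ (the positive global maximum point of $G$). The upper concave envelope of $G$ on an interval $I$ is the smallest concave function on $I$ that is $\ge G$ on $I$. For $u_->u_+$, the entropy solution of the Riemann problem is given by: $u(x,t)=u_-$ if $x\le (G_\frown)'(u_-)t$; $u(x,t)=[(G_\frown)']^{-1}(x/t)$ if $(G_\frown)'(u_-)t<x\le (G_\frown)'(u_+)t$; $u(x,t)=u_+$ if $x>(G_\frown)'(u_+)t$, where $G_\frown$ is the upper concave envelope of $G$ on $[u_+,u_-]$. *)

From Stdlib Require Import Reals Lra.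
Open Scope R_scope.

Definition G (b v : R) : R :=
  - v ^ 2 / 2
  + (4 * b ^ 2 + (1 - 2 * b) ^ 2 * v ^ 2)
    / (2 * (4 * b ^ 2 + (1 - 2 * b) * sqrt (4 * b ^ 2 + (1 - 4 * b) * v ^ 2))).

Definition vmax (b : R) : R :=
  / 2 * sqrt ((1 + 2 * b) * (1 - 6 * b) / (1 - 4 * b)).

Definition concave_on (a c : R) (f : R -> R) : Prop :=
  forall x y l, a <= x <= c -> a <= y <= c -> 0 <= l <= 1 ->
    l * f x + (1 - l) * f y <= f (l * x + (1 - l) * y).

Definition is_upper_concave_envelope (a c : R) (g H : R -> R) : Prop :=
  concave_on a c H /\
  (forall x, a <= x <= c -> g x <= H x) /\
  (forall H', concave_on a c H' -> (forall x, a <= x <= c -> g x <= H' x) ->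
     forall x, a <= x <= c -> H x <= H' x).

Definition deriv_within (a c : R) (f : R -> R) (v d : R) : Prop :=
  forall eps, 0 < eps -> exists delta, 0 < delta /\
    forall y, a <= y <= c -> y <> v -> Rabs (y - v) < delta ->
      Rabs ((f y - f v) / (y - v) - d) < eps.

(* u is the solution of the Riemann problem given by the formula of the paper,
   where H = G_frown (on [up, um], up < um) and dH is its derivative on [up, um];
   the inverse [(G_frown)']^{-1}(x/t) is read as: a value w in [up, um] with
   dH w = x / t. *)
Definition riemann_formula (up um : R) (dH : R -> R) (u : R -> R -> R) : Prop :=
  forall x t, 0 < t ->
    (x <= dH um * t -> u x t = um) /\
    (dH um * t < x <= dH up * t ->
       up <= u x t <= um /\ dH (u x t) = x / t) /\
    (dH up * t < x -> u x t = up).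

From Stdlib Require Import Reals Lra Psatz FunctionalExtensionality.
Open Scope R_scope.

(* Write s = sqrt (4 b^2 + (1 - 4 b) v^2), m = (1 - 2 b) / 2 and k = 2 (1 - 4 b);
   then G = (m^2 - (s - m)^2) / k.  The map v |-> s is convex (a Euclidean
   norm) and s = m exactly at v = +-vmax, so replacing s - m by its positive
   part yields a concave function that equals G for |v| >= vmax and the maximum
   m^2 / k of G on [-vmax, vmax]: this is the upper concave envelope.  It is
   flat exactly on [-vmax, vmax] and strictly below its maximum outside, so by
   concavity its derivative is negative at u_-, positive at u_+, and a small
   negative (resp. positive) derivative forces a state close to vmax (resp.
   -vmax); the rarefaction formula then gives the one-sided limits at x = 0. *)

Definition slope (f : R -> R) (x y : R) : R := (f y - f x) / (y - x).

Lemma slope_sym f x y : slope f x y = slope f y x.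
Proof.
  unfold slope.
  replace (f x - f y) with (- (f y - f x)) by ring.
  replace (x - y) with (- (y - x)) by ring.
  now rewrite Rdiv_opp_r, <- Ropp_div_distr_l, Ropp_involutive.
Qed.

Lemma slope_opp f x y : slope (fun z => f (- z)) (- x) (- y) = - slope f x y.
Proof.
  unfold slope. rewrite !Ropp_involutive.
  replace (- y - - x) with (- (y - x)) by ring.
  apply Rdiv_opp_r.
Qed.

Lemma Rdiv_le_cross a b p q : 0 < p -> 0 < q -> a * q <= b * p -> a / p <= b / q.
Proof.
  intros Hp Hq H.
  apply (Rmult_le_reg_r (p * q)); [nra|].
  replace (a / p * (p * q)) with (a * q) by (field; lra).
  replace (b / q * (p * q)) with (b * p) by (field; lra).
  exact H.
Qed.

Lemma concave_on_opp a c f :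
  concave_on a c f -> concave_on (- c) (- a) (fun x => f (- x)).
Proof.
  intros Hc x y l Hx Hy Hl.
  replace (- (l * x + (1 - l) * y)) with (l * - x + (1 - l) * - y) by ring.
  apply Hc; lra.
Qed.

Lemma deriv_within_opp a c f v d :
  deriv_within a c f v d -> deriv_within (- c) (- a) (fun x => f (- x)) (- v) (- d).
Proof.
  intros Hd eps Heps.
  destruct (Hd eps Heps) as [delta [Hdelta Hy]].
  exists delta; split; [exact Hdelta|].
  intros y Hya Hyv Hyd.
  rewrite Ropp_involutive.
  replace ((f (- y) - f v) / (y - - v) - - d) with (- ((f (- y) - f v) / (- y - v) - d)).
  - rewrite Rabs_Ropp. apply Hy.
    + lra.
    + intros E; apply Hyv; lra.
    + now replace (- y - v) with (- (y - - v)) by ring; rewrite Rabs_Ropp.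
  - replace (- y - v) with (- (y - - v)) by ring.
    rewrite Rdiv_opp_r; ring.
Qed.

Lemma concave_chord a c f x y z : concave_on a c f ->
  a <= x -> x <= y <= z -> z <= c -> x < z ->
  (z - y) * f x + (y - x) * f z <= (z - x) * f y.
Proof.
  intros Hc Hax Hxyz Hzc Hxz.
  set (l := (z - y) / (z - x)).
  assert (Hl : 0 <= l <= 1).
  { unfold l; split.
    - apply Rmult_le_pos; [lra | left; apply Rinv_0_lt_compat; lra].
    - apply (Rmult_le_reg_r (z - x)); [lra|].
      unfold Rdiv; rewrite Rmult_assoc, Rinv_l; lra. }
  pose proof (Hc x z l ltac:(lra) ltac:(lra) Hl) as Hlz.
  replace (l * x + (1 - l) * z) with y in Hlz by (unfold l; field; lra).
  replace (z - y) with (l * (z - x)) by (unfold l; field; lra).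
  replace (y - x) with ((1 - l) * (z - x)) by (unfold l; field; lra).
  nra.
Qed.

Lemma concave_slope_le_l a c f x y z : concave_on a c f ->
  a <= x -> x < y -> y < z -> z <= c -> slope f x z <= slope f x y.
Proof.
  intros Hc Hax Hxy Hyz Hzc.
  pose proof (concave_chord a c f x y z Hc Hax ltac:(lra) Hzc ltac:(lra)).
  apply Rdiv_le_cross; nra.
Qed.

Lemma concave_slope_le_mid a c f x y z : concave_on a c f ->
  a <= x -> x < y -> y < z -> z <= c -> slope f y z <= slope f x y.
Proof.
  intros Hc Hax Hxy Hyz Hzc.
  pose proof (concave_chord a c f x y z Hc Hax ltac:(lra) Hzc ltac:(lra)).
  apply Rdiv_le_cross; nra.
Qed.

Lemma concave_ge_between a c f x z M : concave_on a c f ->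
  a <= x -> x < z -> z <= c -> M <= f x -> M <= f z ->
  forall y, x <= y <= z -> M <= f y.
Proof.
  intros Hc Hax Hxz Hzc Hx Hz y Hy.
  pose proof (concave_chord a c f x y z Hc Hax Hy Hzc Hxz).
  nra.
Qed.

Lemma concave_slope_le_deriv a c f u d w : concave_on a c f ->
  deriv_within a c f u d -> a <= u -> u < w -> w <= c -> slope f u w <= d.
Proof.
  intros Hc Hd Hau Huw Hwc.
  destruct (Rle_or_lt (slope f u w) d) as [|Hlt]; [assumption|exfalso].
  destruct (Hd (slope f u w - d)) as [delta [Hdelta Hy]]; [lra|].
  pose proof (Rmin_l delta (w - u)). pose proof (Rmin_r delta (w - u)).
  assert (0 < Rmin delta (w - u)) by (apply Rmin_glb_lt; lra).
  set (z := u + Rmin delta (w - u) / 2).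
  assert (Hz : Rabs (slope f u z - d) < slope f u w - d).
  { apply Hy; unfold z; [lra | lra | rewrite Rabs_pos_eq; lra]. }
  pose proof (concave_slope_le_l a c f u z w Hc Hau ltac:(unfold z; lra)
                ltac:(unfold z; lra) Hwc).
  apply Rabs_def2 in Hz. lra.
Qed.

Lemma concave_deriv_le_slope a c f u d w : concave_on a c f ->
  deriv_within a c f u d -> a <= w -> w < u -> u <= c -> d <= slope f w u.
Proof.
  intros Hc Hd Haw Hwu Huc.
  pose proof (concave_slope_le_deriv _ _ _ _ _ (- w) (concave_on_opp _ _ _ Hc)
                (deriv_within_opp _ _ _ _ _ Hd) ltac:(lra) ltac:(lra) ltac:(lra)) as H.
  rewrite slope_opp, slope_sym in H. lra.
Qed.

Lemma upper_concave_envelope_unique a c g H1 H2 :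
  is_upper_concave_envelope a c g H1 -> is_upper_concave_envelope a c g H2 ->
  forall x, a <= x <= c -> H1 x = H2 x.
Proof.
  intros [Hc1 [Hg1 Hmin1]] [Hc2 [Hg2 Hmin2]] x Hx.
  apply Rle_antisym; [apply Hmin1 | apply Hmin2]; assumption.
Qed.

Lemma deriv_lt_0_right_of_max a c p H dH :
  concave_on a c H -> (forall v, a <= v <= c -> deriv_within a c H v (dH v)) ->
  (forall v, a <= v <= c -> H v <= H p) ->
  a <= p < c -> (forall w, p < w <= c -> H w < H p) ->
  dH c < 0 /\
  forall eps, 0 < eps -> exists k, 0 < k /\
    forall U, a <= U <= c -> - k < dH U < 0 -> Rabs (U - p) < eps.
Proof.
  intros H_concave H_deriv H_le_max Hp Hlt. split.
  { pose proof (concave_deriv_le_slope a c H c (dH c) p H_concave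
                  (H_deriv c ltac:(lra)) ltac:(lra) ltac:(lra) ltac:(lra)).
    pose proof (Hlt c ltac:(lra)).
    pose proof (Rdiv_neg_pos (H c - H p) (c - p) ltac:(lra) ltac:(lra)).
    unfold slope in *; lra. }
  intros eps Heps.
  pose proof (Rmin_l eps (c - p)). pose proof (Rmin_r eps (c - p)).
  assert (0 < Rmin eps (c - p)) by (apply Rmin_glb_lt; lra).
  set (w := p + Rmin eps (c - p) / 2).
  assert (Hslope : slope H p w < 0).
  { pose proof (Hlt w ltac:(unfold w; lra)).
    unfold slope; apply Rdiv_neg_pos; [lra | unfold w; lra]. }
  exists (- slope H p w); split; [lra|].
  intros U HU [HdU_lo HdU_hi].
  destruct (Rlt_or_le U p) as [HUp|HpU].
  - (* left of the maximum the chord to p rises, so dH U >= 0 *)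
    pose proof (concave_slope_le_deriv a c H U (dH U) p H_concave (H_deriv U HU)
                  ltac:(lra) HUp ltac:(lra)).
    assert (0 <= slope H U p).
    { unfold slope, Rdiv. apply Rmult_le_pos.
      - pose proof (H_le_max U HU); lra.
      - left; apply Rinv_0_lt_compat; lra. }
    lra.
  - destruct (Rle_or_lt U w) as [HUw|HwU].
    + apply Rabs_def1; unfold w in *; lra.
    + pose proof (concave_deriv_le_slope a c H U (dH U) w H_concave (H_deriv U HU)
                    ltac:(unfold w; lra) HwU ltac:(lra)).
      pose proof (concave_slope_le_mid a c H p w U H_concave ltac:(lra)
                    ltac:(unfold w; lra) HwU ltac:(lra)).
      lra.
Qed.

Lemma deriv_gt_0_left_of_max a c p H dH :
  concave_on a c H -> (forall v, a <= v <= c -> deriv_within a c H v (dH v)) ->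
  (forall v, a <= v <= c -> H v <= H p) ->
  a < p <= c -> (forall w, a <= w < p -> H w < H p) ->
  0 < dH a /\
  forall eps, 0 < eps -> exists k, 0 < k /\
    forall U, a <= U <= c -> 0 < dH U < k -> Rabs (U - p) < eps.
Proof.
  intros Hc Hd Hle Hp Hlt.
  assert (Hd' : forall v, - c <= v <= - a ->
            deriv_within (- c) (- a) (fun x => H (- x)) v (- dH (- v))).
  { intros v Hv.
    pose proof (deriv_within_opp _ _ _ _ _ (Hd (- v) ltac:(lra))) as Hdv.
    now rewrite Ropp_involutive in Hdv. }
  destruct (deriv_lt_0_right_of_max (- c) (- a) (- p) (fun x => H (- x))
              (fun x => - dH (- x)) (concave_on_opp _ _ _ Hc) Hd')
    as [Ha Hloc]; cbv beta; rewrite ?Ropp_involutive in *.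
  - intros v Hv. apply Hle; lra.
  - lra.
  - intros w Hw. apply Hlt; lra.
  - split; [lra|].
    intros eps Heps. destruct (Hloc eps Heps) as [k [Hk HU]].
    exists k; split; [exact Hk|]. intros U HUac HdU.
    rewrite <- Rabs_Ropp. replace (- (U - p)) with (- U - - p) by ring.
    apply HU; rewrite ?Ropp_involutive; lra.
Qed.

Lemma riemann_limit_left up um dH u p t :
  riemann_formula up um dH u -> 0 < t -> dH um < 0 < dH up ->
  (forall eps, 0 < eps -> exists k, 0 < k /\
     forall U, up <= U <= um -> - k < dH U < 0 -> Rabs (U - p) < eps) ->
  forall eps, 0 < eps -> exists delta, 0 < delta /\
    forall x, - delta < x < 0 -> Rabs (u x t - p) < eps.
Proof.
  intros Hrf Ht Hd Hloc eps Heps.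
  destruct (Hloc eps Heps) as [k [Hk HU]].
  pose proof (Rmin_l (- dH um) k). pose proof (Rmin_r (- dH um) k).
  set (s := Rmin (- dH um) k) in *.
  assert (0 < s) by (apply Rmin_glb_lt; lra).
  exists (s * t); split; [nra|].
  intros x Hx.
  assert (Hin : dH um * t < x <= dH up * t) by (split; nra).
  destruct (proj1 (proj2 (Hrf x t Ht)) Hin) as [Hu Hdu].
  apply HU; [exact Hu|].
  assert (x / t * t = x) by (field; lra).
  rewrite Hdu; split; nra.
Qed.

Lemma riemann_limit_right up um dH u p t :
  riemann_formula up um dH u -> 0 < t -> dH um < 0 < dH up ->
  (forall eps, 0 < eps -> exists k, 0 < k /\
     forall U, up <= U <= um -> 0 < dH U < k -> Rabs (U - p) < eps) ->
  forall eps, 0 < eps -> exists delta, 0 < delta /\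
    forall x, 0 < x < delta -> Rabs (u x t - p) < eps.
Proof.
  intros Hrf Ht Hd Hloc eps Heps.
  destruct (Hloc eps Heps) as [k [Hk HU]].
  pose proof (Rmin_l (dH up) k). pose proof (Rmin_r (dH up) k).
  set (s := Rmin (dH up) k) in *.
  assert (0 < s) by (apply Rmin_glb_lt; lra).
  exists (s * t); split; [nra|].
  intros x Hx.
  assert (Hin : dH um * t < x <= dH up * t) by (split; nra).
  destruct (proj1 (proj2 (Hrf x t Ht)) Hin) as [Hu Hdu].
  apply HU; [exact Hu|].
  assert (x / t * t = x) by (field; lra).
  rewrite Hdu; split; nra.
Qed.

Definition convex (f : R -> R) : Prop :=
  forall x y l, 0 <= l <= 1 -> f (l * x + (1 - l) * y) <= l * f x + (1 - l) * f y.

Lemma convex_sqrt_quadratic A B : 0 <= A -> 0 <= B ->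
  convex (fun v => sqrt (A + B * v ^ 2)).
Proof.
  intros HA HB x y l Hl. cbv beta.
  set (z := l * x + (1 - l) * y).
  assert (Hsq : forall v, 0 <= sqrt (A + B * v ^ 2) /\
                          sqrt (A + B * v ^ 2) ^ 2 = A + B * v ^ 2).
  { intros v; split; [apply sqrt_pos | apply pow2_sqrt; nra]. }
  destruct (Hsq x) as [Hx0 Hx2]. destruct (Hsq y) as [Hy0 Hy2].
  destruct (Hsq z) as [Hz0 Hz2].
  set (sx := sqrt (A + B * x ^ 2)) in *. set (sy := sqrt (A + B * y ^ 2)) in *.
  set (sz := sqrt (A + B * z ^ 2)) in *.
  (* Cauchy-Schwarz for the vectors (sqrt A, sqrt B x) and (sqrt A, sqrt B y) *)
  assert (Hcs : A + B * x * y <= sx * sy).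
  { assert (E : (sx * sy) ^ 2 - (A + B * x * y) ^ 2 = A * B * (x - y) ^ 2).
    { replace ((sx * sy) ^ 2) with (sx ^ 2 * sy ^ 2) by ring.
      rewrite Hx2, Hy2; ring. }
    assert (0 <= A * B * (x - y) ^ 2)
      by (apply Rmult_le_pos; [apply Rmult_le_pos | apply pow2_ge_0]; lra).
    apply Rsqr_incr_0_var; [rewrite !Rsqr_pow2; lra | nra]. }
  assert (Hsz : sz ^ 2 <= (l * sx + (1 - l) * sy) ^ 2).
  { rewrite Hz2. replace ((l * sx + (1 - l) * sy) ^ 2)
      with (l ^ 2 * sx ^ 2 + (1 - l) ^ 2 * sy ^ 2 + 2 * (l * (1 - l)) * (sx * sy)) by ring.
    rewrite Hx2, Hy2. unfold z.
    assert (0 <= l * (1 - l)) by nra. nra. }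
  apply Rsqr_incr_0_var; [rewrite !Rsqr_pow2; lra | nra].
Qed.

Lemma convex_sq_pos_part s m : convex s -> convex (fun v => Rmax (s v - m) 0 ^ 2).
Proof.
  intros Hs x y l Hl. cbv beta.
  pose proof (Hs x y l Hl).
  pose proof (Rmax_l (s x - m) 0). pose proof (Rmax_r (s x - m) 0).
  pose proof (Rmax_l (s y - m) 0). pose proof (Rmax_r (s y - m) 0).
  set (P := Rmax (s x - m) 0) in *. set (Q := Rmax (s y - m) 0) in *.
  assert (HPQ : Rmax (s (l * x + (1 - l) * y) - m) 0 <= l * P + (1 - l) * Q)
    by (apply Rmax_lub; nra).
  pose proof (Rmax_r (s (l * x + (1 - l) * y) - m) 0).
  assert (Hjensen : (l * P + (1 - l) * Q) ^ 2 <= l * P ^ 2 + (1 - l) * Q ^ 2).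
  { assert (0 <= l * (1 - l) * (P - Q) ^ 2)
      by (apply Rmult_le_pos; [nra | apply pow2_ge_0]).
    nra. }
  eapply Rle_trans; [apply pow_incr; split; eassumption | exact Hjensen].
Qed.

Lemma concave_on_of_convex a c g C k : convex g -> 0 < k ->
  concave_on a c (fun v => (C - g v) / k).
Proof.
  intros Hg Hk x y l _ _ Hl.
  pose proof (Hg x y l Hl).
  pose proof (Rinv_0_lt_compat k Hk).
  unfold Rdiv. nra.
Qed.

Definition Groot (b v : R) : R := sqrt (4 * b ^ 2 + (1 - 4 * b) * v ^ 2).
Definition Groot_max (b : R) : R := (1 - 2 * b) / 2.
Definition Gden (b : R) : R := 2 * (1 - 4 * b).
Definition Gmax (b : R) : R := Groot_max b ^ 2 / Gden b.
Definition Genv (b v : R) : R :=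
  (Groot_max b ^ 2 - Rmax (Groot b v - Groot_max b) 0 ^ 2) / Gden b.

Section Flux.

Variable b : R.
Hypothesis Hb : 0 < b < 1 / 6.

Lemma Groot_ge_0 v : 0 <= Groot b v.
Proof. apply sqrt_pos. Qed.

Lemma Groot_sq v : Groot b v ^ 2 = 4 * b ^ 2 + (1 - 4 * b) * v ^ 2.
Proof. apply pow2_sqrt; nra. Qed.

Lemma Gden_gt_0 : 0 < Gden b.
Proof. unfold Gden; lra. Qed.

Lemma G_Groot v : G b v = (Groot_max b ^ 2 - (Groot b v - Groot_max b) ^ 2) / Gden b.
Proof.
  pose proof (Groot_ge_0 v) as Hs0. pose proof (Groot_sq v) as Hs2.
  unfold G. fold (Groot b v). unfold Groot_max, Gden.
  set (s := Groot b v) in *.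
  assert (HD : 0 < 4 * b ^ 2 + (1 - 2 * b) * s) by nra.
  replace (v ^ 2) with ((s ^ 2 - 4 * b ^ 2) / (1 - 4 * b)) by (rewrite Hs2; field; lra).
  field. lra.
Qed.

Lemma vmax_gt_0 : 0 < vmax b.
Proof.
  unfold vmax. apply Rmult_lt_0_compat; [lra|].
  apply sqrt_lt_R0, Rdiv_lt_0_compat; nra.
Qed.

Lemma Groot_sq_sub v :
  Groot b v ^ 2 - Groot_max b ^ 2 = (1 - 4 * b) * (v ^ 2 - vmax b ^ 2).
Proof.
  rewrite Groot_sq. unfold vmax, Groot_max.
  rewrite Rpow_mult_distr, pow2_sqrt by (apply Rlt_le, Rdiv_lt_0_compat; nra).
  field. lra.
Qed.

Lemma Groot_le_max v : v ^ 2 <= vmax b ^ 2 -> Groot b v <= Groot_max b.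
Proof.
  intros Hv. pose proof (Groot_sq_sub v). pose proof (Groot_ge_0 v).
  apply Rsqr_incr_0_var; [rewrite !Rsqr_pow2; nra | unfold Groot_max; lra].
Qed.

Lemma Groot_gt_max v : vmax b ^ 2 < v ^ 2 -> Groot_max b < Groot b v.
Proof.
  intros Hv. pose proof (Groot_sq_sub v). pose proof (Groot_ge_0 v).
  assert (Groot_max b ^ 2 < Groot b v ^ 2) by nra.
  unfold Groot_max in *; nra.
Qed.

Lemma G_le_Genv v : G b v <= Genv b v.
Proof.
  rewrite G_Groot. unfold Genv, Rdiv.
  apply Rmult_le_compat_r; [left; apply Rinv_0_lt_compat, Gden_gt_0|].
  pose proof (Rmax_l (Groot b v - Groot_max b) 0).
  pose proof (Rmax_r (Groot b v - Groot_max b) 0).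
  destruct (Rle_or_lt (Groot b v - Groot_max b) 0).
  - rewrite Rmax_right by lra. nra.
  - rewrite Rmax_left by lra. lra.
Qed.

Lemma Genv_le_Gmax v : Genv b v <= Gmax b.
Proof.
  unfold Genv, Gmax, Rdiv.
  apply Rmult_le_compat_r; [left; apply Rinv_0_lt_compat, Gden_gt_0|].
  nra.
Qed.

Lemma Genv_eq_Gmax v : v ^ 2 <= vmax b ^ 2 -> Genv b v = Gmax b.
Proof.
  intros Hv. pose proof (Groot_le_max v Hv).
  unfold Genv, Gmax. rewrite Rmax_right by lra. f_equal; ring.
Qed.

Lemma Genv_eq_G v : vmax b ^ 2 < v ^ 2 -> Genv b v = G b v.
Proof.
  intros Hv. pose proof (Groot_gt_max v Hv).
  unfold Genv. rewrite G_Groot, Rmax_left by lra. reflexivity.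
Qed.

Lemma Genv_lt_Gmax v : vmax b ^ 2 < v ^ 2 -> Genv b v < Gmax b.
Proof.
  intros Hv. pose proof (Groot_gt_max v Hv).
  unfold Genv, Gmax, Rdiv. rewrite Rmax_left by lra.
  apply Rmult_lt_compat_r; [apply Rinv_0_lt_compat, Gden_gt_0|].
  assert (0 < (Groot b v - Groot_max b) ^ 2) by (apply pow_lt; lra).
  lra.
Qed.

Lemma G_eq_Gmax v : v ^ 2 = vmax b ^ 2 -> G b v = Gmax b.
Proof.
  intros Hv. apply Rle_antisym.
  - eapply Rle_trans; [apply G_le_Genv | apply Genv_le_Gmax].
  - assert (Hroot : Groot b v = Groot_max b).
    { pose proof (Groot_sq_sub v). pose proof (Groot_ge_0 v).
      unfold Groot_max in *; nra. }
    rewrite G_Groot, Hroot. unfold Gmax. right; f_equal; ring.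
Qed.

Lemma Genv_concave a c : concave_on a c (Genv b).
Proof.
  apply concave_on_of_convex; [|apply Gden_gt_0].
  apply convex_sq_pos_part, convex_sqrt_quadratic; nra.
Qed.

Lemma Genv_is_envelope up um : up < - vmax b -> vmax b < um ->
  is_upper_concave_envelope up um (G b) (Genv b).
Proof.
  intros Hup Hum. pose proof vmax_gt_0.
  split; [apply Genv_concave|]. split; [intros; apply G_le_Genv|].
  intros H' Hc HG x Hx.
  destruct (Rle_or_lt (x ^ 2) (vmax b ^ 2)) as [Hin|Hout].
  - rewrite Genv_eq_Gmax by exact Hin.
    (* H' lies above G = Gmax at both ends of [-vmax, vmax], hence on all of it *)
    apply (concave_ge_between up um H' (- vmax b) (vmax b) _ Hc); try lra.
    + rewrite <- (G_eq_Gmax (- vmax b)) by ring. apply HG; lra.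
    + rewrite <- (G_eq_Gmax (vmax b)) by ring. apply HG; lra.
    + split; nra.
  - rewrite Genv_eq_G by exact Hout. apply HG, Hx.
Qed.

Lemma Genv_piecewise :
  (fun v => if Rle_dec (- vmax b) v then
              if Rle_dec v (vmax b) then G b (vmax b) else G b v
            else G b v) = Genv b.
Proof.
  pose proof vmax_gt_0.
  apply functional_extensionality; intros v.
  destruct (Rle_dec (- vmax b) v); [destruct (Rle_dec v (vmax b))|].
  - rewrite G_eq_Gmax, Genv_eq_Gmax by nra. reflexivity.
  - rewrite Genv_eq_G by nra. reflexivity.
  - rewrite Genv_eq_G by nra. reflexivity.
Qed.

End Flux.

Lemma envelope_deriv_near_vmax b up um H dH :
  0 < b < 1 / 6 -> up < - vmax b -> vmax b < um ->
  is_upper_concave_envelope up um (G b) H ->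
  (forall v, up <= v <= um -> deriv_within up um H v (dH v)) ->
  (dH um < 0 /\
   forall eps, 0 < eps -> exists k, 0 < k /\
     forall U, up <= U <= um -> - k < dH U < 0 -> Rabs (U - vmax b) < eps) /\
  (0 < dH up /\
   forall eps, 0 < eps -> exists k, 0 < k /\
     forall U, up <= U <= um -> 0 < dH U < k -> Rabs (U - - vmax b) < eps).
Proof.
  intros Hb Hup Hum HH Hder.
  pose proof (vmax_gt_0 b Hb).
  assert (HGenv : forall v, up <= v <= um -> H v = Genv b v).
  { apply (upper_concave_envelope_unique up um (G b)); [exact HH|].
    apply Genv_is_envelope; assumption. }
  assert (Hpeak : forall p, p ^ 2 = vmax b ^ 2 -> up <= p <= um -> H p = Gmax b).
  { intros p Hp Hpr. rewrite HGenv by exact Hpr. apply Genv_eq_Gmax; lra. }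
  assert (Hle : forall p, p ^ 2 = vmax b ^ 2 -> up <= p <= um ->
                forall v, up <= v <= um -> H v <= H p).
  { intros p Hp Hpr v Hv. rewrite (Hpeak p), (HGenv v) by assumption. apply Genv_le_Gmax; lra. }
  assert (Hlt : forall p, p ^ 2 = vmax b ^ 2 -> up <= p <= um ->
                forall w, up <= w <= um -> vmax b ^ 2 < w ^ 2 -> H w < H p).
  { intros p Hp Hpr w Hw Hw2. rewrite (Hpeak p), (HGenv w) by assumption.
    apply Genv_lt_Gmax; lra. }
  split.
  - apply (deriv_lt_0_right_of_max up um (vmax b) H dH (proj1 HH) Hder).
    + apply Hle; [ring | lra].
    + lra.
    + intros w Hw. apply Hlt; [ring | lra | lra | nra].
  - apply (deriv_gt_0_left_of_max up um (- vmax b) H dH (proj1 HH) Hder).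
    + apply Hle; [ring | lra].
    + lra.
    + intros w Hw. apply Hlt; [ring | lra | lra | nra].
Qed.

Theorem mainTheorem6 :
  forall b um up : R,
    0 < b < 1 / 6 ->
    -1 <= um <= 1 -> -1 <= up <= 1 ->
    vmax b < um -> up < - vmax b ->
    is_upper_concave_envelope up um (G b)
      (fun v => if Rle_dec (- vmax b) v then
                  if Rle_dec v (vmax b) then G b (vmax b) else G b v
                else G b v)
    /\
    (forall (H dH : R -> R) (u : R -> R -> R),
       is_upper_concave_envelope up um (G b) H ->
       (forall v, up <= v <= um -> deriv_within up um H v (dH v)) ->
       riemann_formula up um dH u ->
       dH um < 0 < dH up /\
       forall t, 0 < t ->
         (forall eps, 0 < eps -> exists delta, 0 < delta /\
            forall x, - delta < x < 0 -> Rabs (u x t - vmax b) < eps) /\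
         (forall eps, 0 < eps -> exists delta, 0 < delta /\
            forall x, 0 < x < delta -> Rabs (u x t - - vmax b) < eps)).
Proof.
  intros b um up Hb _ _ Hum Hup.
  split.
  { rewrite (Genv_piecewise b Hb). apply Genv_is_envelope; assumption. }
  intros H dH u HH Hder Hrf.
  destruct (envelope_deriv_near_vmax b up um H dH Hb Hup Hum HH Hder)
    as [[Hdum Hright] [Hdup Hleft]].
  split; [lra|].
  intros t Ht. split.
  - exact (riemann_limit_left up um dH u (vmax b) t Hrf Ht (conj Hdum Hdup) Hright).
  - exact (riemann_limit_right up um dH u (- vmax b) t Hrf Ht (conj Hdum Hdup) Hleft).
Qed.
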